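(* Let $R$ be a nonzero commutative ring and $n\ge2$. Then $R$ has no zero divisors if and only if for all sets $\mathscr{R},\mathscr{S}$ of $R$-weighted complete graphs on $n$ vertices, $\mathscr R*\mathscr S=\{0\}$ implies $\mathscr R=\{0\}$ or $\mathscr S=\{0\}$, where $0$ denotes the graph with all weights $0$ (on the relevant vertex set).
   Context: An $R$-weighted complete graph $K$ is a finite vertex set with a weight $v_K(e)\in R$ on every 2-subset $e$. For such $H,G$ with equal vertex counts and a bijection $f:V(H)\to V(G)$, $H*_fG$ has vertex set $V(H)$ and weights $v_H(\{x,y\})\cdot v_G(\{f(x),f(y)\})$; $H*G=\{H*_fG: f \text{ bijection}\}$, and for sets $\mathscr H*\mathscr G=\bigcup_{H\in\mathscr H,G\in\mathscr G}H*G$. *)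

From mathcomp Require Import all_boot all_order all_algebra.
From mathcomp Require Import fingroup perm.
Set Implicit Arguments. Unset Strict Implicit. Unset Printing Implicit Defensive.
Import GRing.Theory.
Local Open Scope ring_scope.

(* An R-weighted complete graph on the vertex set 'I_n: a weight on every
   2-subset of 'I_n.  Represented by a finite function on {set 'I_n} that
   vanishes on sets of cardinality different from 2 (so that equality of
   graphs is equality of the weights on 2-subsets). *)
Record wgraph (R : comNzRingType) (n : nat) := WGraph {
  wfun :> {ffun {set 'I_n} -> R};
  wfunP : [forall e : {set 'I_n}, (#|e| != 2)%N ==> (wfun e == 0)] }.

Lemma zero_wgraph_subproof (R : comNzRingType) (n : nat) :
  [forall e : {set 'I_n}, (#|e| != 2)%N ==> ([ffun _ => 0 : R] e == 0)].
Proof. by apply/forallP => e; rewrite ffunE eqxx implybT. Qed.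

Definition zero_wgraph (R : comNzRingType) (n : nat) : wgraph R n :=
  WGraph (@zero_wgraph_subproof R n).

Definition wprod_fun (R : comNzRingType) (n : nat) (H G : wgraph R n)
  (f : {perm 'I_n}) : {ffun {set 'I_n} -> R} :=
  [ffun e : {set 'I_n} => if #|e| == 2%N then H e * G [set f x | x in e] else 0].

Lemma wprod_subproof (R : comNzRingType) (n : nat) (H G : wgraph R n)
  (f : {perm 'I_n}) :
  [forall e : {set 'I_n}, (#|e| != 2)%N ==> (wprod_fun H G f e == 0)].
Proof. apply/forallP => e; rewrite ffunE; case: (#|e| =P 2%N) => //= _; exact: eqxx. Qed.

Definition wprod (R : comNzRingType) (n : nat) (H G : wgraph R n)
  (f : {perm 'I_n}) : wgraph R n := WGraph (wprod_subproof H G f).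

Definition gset (R : comNzRingType) (n : nat) := wgraph R n -> Prop.

Definition gset_prod (R : comNzRingType) (n : nat) (Hs Gs : gset R n) : gset R n :=
  fun K => exists H G f, Hs H /\ Gs G /\ K = wprod H G f.

Definition is_zero_set (R : comNzRingType) (n : nat) (Hs : gset R n) : Prop :=
  forall K, Hs K <-> K = zero_wgraph R n.

Definition no_zero_divisors (R : comNzRingType) : Prop :=
  forall a b : R, a * b = 0 -> a = 0 \/ b = 0.

(* Over a domain, nonzero graphs H and G have nonzero weights on some edges
   {x, y} and {x', y'}; a bijection sending x, y to x', y' makes the weight
   of H *_f G on {x, y} a nonzero product.  Conversely, if a b = 0 with a, b
   nonzero, the constant graphs a and b are nonzero but every product of them
   is the constant graph a b = 0. *)
From mathcomp Require Import all_boot all_order all_algebra.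
From mathcomp Require Import fingroup perm.
From Stdlib Require Import Classical.
Set Implicit Arguments. Unset Strict Implicit.
Import GRing.Theory.
Local Open Scope ring_scope.

Section WeightedGraphs.

Variables (R : comNzRingType) (n : nat).
Implicit Types (H G : wgraph R n) (f : {perm 'I_n}) (x y : 'I_n).

Lemma wgraphP H G : wfun H =1 wfun G -> H = G.
Proof.
case: H G => h hP [g gP] /ffunP /= eq_hg; move: hP gP; rewrite eq_hg => hP gP.
by rewrite (bool_irrelevance hP gP).
Qed.

Lemma wgraph_neq0 H :
  H <> zero_wgraph R n -> exists x y, x != y /\ H [set x; y] != 0.
Proof.
move=> Hneq0; have [/forallP H0 | ] := boolP [forall e, H e == 0].
  by case: Hneq0; apply: wgraphP => e; rewrite ffunE; apply/eqP.
rewrite negb_forall => /existsP [e He].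
have /implyP := forallP (wfunP H) e; case: (boolP (#|e| == 2)).
  by case/cards2P => x [y [xy eq_e]] _; exists x, y; rewrite -eq_e.
by move=> _ /(_ isT) /eqP He0; rewrite He0 eqxx in He.
Qed.

Lemma wprod_pair H G f x y :
  x != y -> wprod H G f [set x; y] = H [set x; y] * G [set f x; f y].
Proof. by move=> xy; rewrite ffunE cards2 xy imsetU1 imset_set1. Qed.

Lemma perm_map2 x y x' y' :
  x != y -> x' != y' -> exists f : {perm 'I_n}, f x = x' /\ f y = y'.
Proof.
move=> xy x'y'; pose g := tperm x x'.
exists (g * tperm (g y) y')%g; rewrite !permM tpermL; split; last exact: tpermL.
have gyx' : g y != x' by rewrite -[x'](tpermL x x') (inj_eq perm_inj) eq_sym.
by rewrite tpermD // eq_sym.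
Qed.

Lemma wprod_neq0 H G :
  no_zero_divisors R -> H <> zero_wgraph R n -> G <> zero_wgraph R n ->
  exists f, wprod H G f <> zero_wgraph R n.
Proof.
move=> domR /wgraph_neq0 [x [y [xy Hxy]]] /wgraph_neq0 [x' [y' [xy' Gxy]]].
have [f [fx fy]] := perm_map2 xy xy'.
exists f => /(congr1 (fun K : wgraph R n => K [set x; y])).
rewrite wprod_pair // fx fy ffunE => /domR [] /eqP.
  by rewrite (negbTE Hxy).
by rewrite (negbTE Gxy).
Qed.

Lemma const_wgraph_subproof (a : R) :
  [forall e : {set 'I_n}, (#|e| != 2)%N ==>
     ([ffun e : {set 'I_n} => if #|e| == 2%N then a else 0] e == 0)].
Proof. by apply/forallP => e; rewrite ffunE; case: ifP => //= _; rewrite eqxx. Qed.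

Definition const_wgraph (a : R) : wgraph R n := WGraph (const_wgraph_subproof a).

Lemma const_wgraph_eq0 (a : R) :
  (2 <= n)%N -> const_wgraph a = zero_wgraph R n -> a = 0.
Proof.
move=> n_ge2 /(congr1 (fun K : wgraph R n => K [set Ordinal (ltnW n_ge2); Ordinal n_ge2])).
by rewrite !ffunE cards2.
Qed.

Lemma const_wgraph0 : const_wgraph 0 = zero_wgraph R n.
Proof. by apply: wgraphP => e; rewrite !ffunE if_same. Qed.

Lemma wprod_const (a b : R) f :
  wprod (const_wgraph a) (const_wgraph b) f = const_wgraph (a * b).
Proof.
apply: wgraphP => e; rewrite !ffunE card_imset; last exact: perm_inj.
by do ?case: ifP.
Qed.

Definition gset1 K : gset R n := fun K' => K' = K.

Lemma is_zero_set1 K : is_zero_set (gset1 K) <-> K = zero_wgraph R n.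
Proof. by split=> [/(_ K) [->] | -> K'] //; split. Qed.

Lemma is_zero_setP (Hs : gset R n) H0 :
  Hs H0 -> ~ (exists H, Hs H /\ H <> zero_wgraph R n) -> is_zero_set Hs.
Proof.
move=> HsH0 no_nonzero.
have Hs_eq0 H : Hs H -> H = zero_wgraph R n.
  by move=> HsH; apply: NNPP => Hneq0; apply: no_nonzero; exists H.
by move=> K; split=> [/Hs_eq0 | ->] //; rewrite -(Hs_eq0 _ HsH0).
Qed.

Lemma domain_gset_prod_eq0 (Rs Ss : gset R n) :
  no_zero_divisors R -> is_zero_set (gset_prod Rs Ss) ->
  is_zero_set Rs \/ is_zero_set Ss.
Proof.
move=> domR RSeq0.
(* 0 lies in the product, so neither factor is empty. *)
have [H0 [G0 [f0 [RsH0 [SsG0 _]]]]] := proj2 (RSeq0 _) erefl.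
have [[H [RsH Hneq0]] | ] := classic (exists H, Rs H /\ H <> zero_wgraph R n);
  last by move=> Rs_eq0; left; exact: is_zero_setP RsH0 Rs_eq0.
have [[G [SsG Gneq0]] | ] := classic (exists G, Ss G /\ G <> zero_wgraph R n);
  last by move=> Ss_eq0; right; exact: is_zero_setP SsG0 Ss_eq0.
have [f] := wprod_neq0 domR Hneq0 Gneq0.
by case; apply/RSeq0; exists H, G, f.
Qed.

Lemma zero_divisor_gset_prod (a b : R) :
  a * b = 0 ->
  is_zero_set (gset_prod (gset1 (const_wgraph a)) (gset1 (const_wgraph b))).
Proof.
move=> ab0 K; split=> [[_ [_ [f [-> [-> ->]]]]] | ->].
  by rewrite wprod_const ab0 const_wgraph0.
exists (const_wgraph a), (const_wgraph b), 1%g.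
by rewrite wprod_const ab0 const_wgraph0.
Qed.

End WeightedGraphs.

Theorem mainTheorem14 (R : comNzRingType) (n : nat) (hn : (2 <= n)%N) :
  no_zero_divisors R <->
  (forall Rs Ss : gset R n,
     is_zero_set (gset_prod Rs Ss) -> is_zero_set Rs \/ is_zero_set Ss).
Proof.
split=> [domR Rs Ss | prod_eq0 a b ab0]; first exact: domain_gset_prod_eq0.
case: (prod_eq0 _ _ (zero_divisor_gset_prod ab0)) => /is_zero_set1 ab_eq0.
  by left; apply: (const_wgraph_eq0 hn).
by right; apply: (const_wgraph_eq0 hn).
Qed.
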